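(* For every natural number $n$ and all annotated terms $g,d$: if $\mathrm{decide}(n,g,d)=\mathrm{true}$, then the sequent $(g,d)$ is derivable in the orthologic sequent calculus $\mathcal{P}$.
   Context: Terms are generated by the grammar $t ::= \mathrm{Var}(k) \mid \mathrm{Meet}(t,t) \mid \mathrm{Join}(t,t) \mid \mathrm{Not}(t)$, where $k$ ranges over positive integers. An annotated term is either $N$, $L\,t$ or $R\,t$ for a term $t$. A sequent is an ordered pair of annotated terms. The proof system $\mathcal{P}$: the derivable sequents form the least set of sequents closed under the following rules, where $\gamma,\delta$ are arbitrary annotated terms and $a,b$ are terms. - Hyp: $(L\,a,R\,a)$. - Weaken: from $(\gamma,N)$ infer $(\gamma,\delta)$. - Contract: from $(\gamma,\gamma)$ infer $(\gamma,N)$. - Swap: from $(\gamma,\delta)$ infer $(\delta,\gamma)$. - LeftAnd1 and LeftAnd2: from $(\gamma,L\,a)$, respectively from $(\gamma,L\,b)$, infer $(\gamma,L\,\mathrm{Meet}(a,b))$. - LeftOr: from $(\gamma,L\,a)$ and $(\gamma,L\,b)$ infer $(\gamma,L\,\mathrm{Join}(a,b))$. - LeftNot: from $(\gamma,R\,a)$ infer $(\gamma,L\,\mathrm{Not}(a))$. - RightAnd: from $(\gamma,R\,a)$ and $(\gamma,R\,b)$ infer $(\gamma,R\,\mathrm{Meet}(a,b))$. - RightOr1 and RightOr2: from $(\gamma,R\,a)$, respectively from $(\gamma,R\,b)$, infer $(\gamma,R\,\mathrm{Join}(a,b))$. - RightNot: from $(\gamma,L\,a)$ infer $(\gamma,R\,\mathrm{Not}(a))$.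 - Cut: from $(\gamma,R\,b)$ and $(L\,b,\delta)$ infer $(\gamma,\delta)$. The fuel-bounded proof-search function $\mathrm{decide}:\mathbb{N}\times\mathrm{AnTerm}\times\mathrm{AnTerm}\to\{\mathrm{true},\mathrm{false}\}$ is defined recursively. First, $\mathrm{decide}(0,g,d)=\mathrm{false}$. Second, $\mathrm{decide}(n+1,g,d)=\mathrm{true}$ iff at least one of the following holds, where every recursive call uses fuel $n$: - $g=L\,\mathrm{Var}(a)$ and $d=R\,\mathrm{Var}(a)$ for the same $a$; - $\mathrm{decide}(n,g,N)$; - $d=N$ and $\mathrm{decide}(n,g,g)$; - $g=L\,\mathrm{Meet}(a,b)$ and $\mathrm{decide}(n,L\,a,d)$; - $g=L\,\mathrm{Meet}(a,b)$ and $\mathrm{decide}(n,L\,b,d)$; - $g=L\,\mathrm{Join}(a,b)$ and both $\mathrm{decide}(n,L\,a,d)$ and $\mathrm{decide}(n,L\,b,d)$; - $g=L\,\mathrm{Not}(a)$ and $\mathrm{decide}(n,R\,a,d)$; - $g=R\,\mathrm{Join}(a,b)$ and $\mathrm{decide}(n,R\,a,d)$; - $g=R\,\mathrm{Join}(a,b)$ and $\mathrm{decide}(n,R\,b,d)$; - $g=R\,\mathrm{Meet}(a,b)$ and both $\mathrm{decide}(n,R\,a,d)$ and $\mathrm{decide}(n,R\,b,d)$; - $g=R\,\mathrm{Not}(a)$ and $\mathrm{decide}(n,L\,a,d)$; - $\mathrm{decide}(n,d,g)$. *)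

From Stdlib Require Import PArith Bool.

Inductive Term : Type :=
| Var : positive -> Term
| Meet : Term -> Term -> Term
| Join : Term -> Term -> Term
| Not : Term -> Term.

Inductive AnTerm : Type :=
| N : AnTerm
| L : Term -> AnTerm
| R : Term -> AnTerm.

Inductive P : AnTerm -> AnTerm -> Prop :=
| Hyp : forall a, P (L a) (R a)
| Weaken : forall g d, P g N -> P g d
| Contract : forall g, P g g -> P g N
| Swap : forall g d, P g d -> P d g
| LeftAnd1 : forall g a b, P g (L a) -> P g (L (Meet a b))
| LeftAnd2 : forall g a b, P g (L b) -> P g (L (Meet a b))
| LeftOr : forall g a b, P g (L a) -> P g (L b) -> P g (L (Join a b))
| LeftNot : forall g a, P g (R a) -> P g (L (Not a))
| RightAnd : forall g a b, P g (R a) -> P g (R b) -> P g (R (Meet a b))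
| RightOr1 : forall g a b, P g (R a) -> P g (R (Join a b))
| RightOr2 : forall g a b, P g (R b) -> P g (R (Join a b))
| RightNot : forall g a, P g (L a) -> P g (R (Not a))
| Cut : forall g d b, P g (R b) -> P (L b) d -> P g d.

Definition isN (d : AnTerm) : bool := match d with N => true | _ => false end.

Fixpoint decide (n : nat) (g d : AnTerm) {struct n} : bool :=
  match n with
  | O => false
  | S n' =>
    (match g, d with
     | L (Var a), R (Var b) => Pos.eqb a b
     | _, _ => false
     end)
    || decide n' g N
    || (isN d && decide n' g g)
    || (match g with
        | L (Meet a b) => decide n' (L a) d || decide n' (L b) d
        | L (Join a b) => decide n' (L a) d && decide n' (L b) d
        | L (Not a) => decide n' (R a) d
        | R (Join a b) => decide n' (R a) d || decide n' (R b) d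
        | R (Meet a b) => decide n' (R a) d && decide n' (R b) d
        | R (Not a) => decide n' (L a) d
        | _ => false
        end)
    || decide n' d g
  end.

(* Proof search is sound: each clause of [decide] mirrors a rule of [P]. The
   only mismatch is that [decide] decomposes the first component of a sequent
   while the logical rules of [P] act on the second; [Swap] moves every
   logical rule to the first component. *)
From Stdlib Require Import PArith Bool.

Lemma LeftAnd1_fst a b d : P (L a) d -> P (L (Meet a b)) d.
Proof. intros H; apply Swap, LeftAnd1, Swap, H. Qed.

Lemma LeftAnd2_fst a b d : P (L b) d -> P (L (Meet a b)) d.
Proof. intros H; apply Swap, LeftAnd2, Swap, H. Qed.

Lemma LeftOr_fst a b d : P (L a) d -> P (L b) d -> P (L (Join a b)) d.
Proof. intros Ha Hb; apply Swap, LeftOr; apply Swap; assumption. Qed.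

Lemma LeftNot_fst a d : P (R a) d -> P (L (Not a)) d.
Proof. intros H; apply Swap, LeftNot, Swap, H. Qed.

Lemma RightAnd_fst a b d : P (R a) d -> P (R b) d -> P (R (Meet a b)) d.
Proof. intros Ha Hb; apply Swap, RightAnd; apply Swap; assumption. Qed.

Lemma RightOr1_fst a b d : P (R a) d -> P (R (Join a b)) d.
Proof. intros H; apply Swap, RightOr1, Swap, H. Qed.

Lemma RightOr2_fst a b d : P (R b) d -> P (R (Join a b)) d.
Proof. intros H; apply Swap, RightOr2, Swap, H. Qed.

Lemma RightNot_fst a d : P (L a) d -> P (R (Not a)) d.
Proof. intros H; apply Swap, RightNot, Swap, H. Qed.

Definition axiom_check (g d : AnTerm) : bool :=
  match g, d with
  | L (Var a), R (Var b) => Pos.eqb a b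
  | _, _ => false
  end.

Definition logical_step (dec : AnTerm -> AnTerm -> bool) (g d : AnTerm) : bool :=
  match g with
  | L (Meet a b) => dec (L a) d || dec (L b) d
  | L (Join a b) => dec (L a) d && dec (L b) d
  | L (Not a) => dec (R a) d
  | R (Join a b) => dec (R a) d || dec (R b) d
  | R (Meet a b) => dec (R a) d && dec (R b) d
  | R (Not a) => dec (L a) d
  | _ => false
  end.

Lemma decide_S n g d :
  decide (S n) g d =
  axiom_check g d || decide n g N || (isN d && decide n g g)
  || logical_step (decide n) g d || decide n d g.
Proof. reflexivity. Qed.

Lemma axiom_check_sound g d : axiom_check g d = true -> P g d.
Proof.
  destruct g as [|[a| | |]|]; try discriminate;
  destruct d as [| |[b| | |]]; try discriminate.
  intros Hab; apply Pos.eqb_eq in Hab; subst; apply Hyp.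
Qed.

Lemma logical_step_sound (dec : AnTerm -> AnTerm -> bool) :
  (forall g d, dec g d = true -> P g d) ->
  forall g d, logical_step dec g d = true -> P g d.
Proof.
  intros dec_sound g d H.
  destruct g as [|[a|a b|a b|a]|[a|a b|a b|a]]; simpl in H; try discriminate.
  - apply orb_true_iff in H as [H|H];
      [apply LeftAnd1_fst | apply LeftAnd2_fst]; auto.
  - apply andb_true_iff in H as [Ha Hb]; apply LeftOr_fst; auto.
  - apply LeftNot_fst; auto.
  - apply andb_true_iff in H as [Ha Hb]; apply RightAnd_fst; auto.
  - apply orb_true_iff in H as [H|H];
      [apply RightOr1_fst | apply RightOr2_fst]; auto.
  - apply RightNot_fst; auto.
Qed.

Theorem mainTheorem2 : forall (n : nat) (g d : AnTerm),
  decide n g d = true -> P g d.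
Proof.
  induction n as [|n IH]; intros g d H; [discriminate|].
  rewrite decide_S in H.
  repeat (apply orb_true_iff in H as [H|H]).
  - apply axiom_check_sound, H.
  - apply Weaken, IH, H.
  - apply andb_true_iff in H as [HN Hgg].
    destruct d; try discriminate.
    apply Contract, IH, Hgg.
  - apply (logical_step_sound _ IH), H.
  - apply Swap, IH, H.
Qed.
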